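(* Assume that for every $x\in V$ the functions $s\mapsto H(x,s)$ and $s\mapsto f_l(x,s)$ ($l=1,\dots,m$) are nondecreasing. If $(u^1,\dots,u^m)$ and $(v^1,\dots,v^m)$ both solve the discrete system (S), then for every $l=1,\dots,m$, $$\{x\in V: u^l(x)>v^l(x)\}\subset\{x\in V:\hat{u}^l(x)>\hat{v}^l(x)\}\subset\{x\in V: u^l(x)\ge v^l(x)\}.$$
   Context: Let $G=(V,E)$ be a finite, connected, undirected graph with at least two vertices. For $x,y\in V$, $d(x,y)$ denotes the graph (shortest-path) distance, and $\deg(x)=|\{y\in V:(x,y)\in E\}|$. The boundary of $G$ is $$\partial G=\Big\{x\in V:\ \exists\, y\in V \text{ with } \tfrac{1}{\deg(x)}\textstyle\sum_{(x,z)\in E} d(z,y)<d(x,y)\Big\},$$ and the interior is $G^o=V\setminus\partial G$. For $r:V\to\mathbb{R}$, the mean value at $x$ is $\overline{r}(x)=\frac{1}{\deg(x)}\sum_{(x,y)\in E} r(y)$. Fix an integer $m\ge1$. Let $H:V\times[0,\infty)\to\mathbb{R}$ and $f_l:V\times[0,\infty)\to\mathbb{R}$ ($l=1,\dots,m$) be continuous in the second variable with $H(x,0)=0$ and $f_l(x,0)=0$ for all $x\in V$; they are extended to negative arguments by $H(x,s)=-H(x,-s)$ and $f_l(x,s)=-f_l(x,-s)$ for $s<0$. Let $\phi^l:\partial G\to[0,\infty)$ ($l=1,\dots,m$) be boundary data satisfying $\phi^i(x)\phi^j(x)=0$ for all $x\in\partial G$ and $i\neq j$. The discrete system (S) for $(u^1,\dots,u^m)$,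 $u^l:V\to\mathbb{R}$, is: for every $l=1,\dots,m$, $$u^l(x)=\max\Big(H\Big(x,\ \overline{u}^l(x)-\sum_{p\neq l}\overline{u}^p(x)\Big)-f_l\big(x,u^l(x)\big),\ 0\Big)\quad (x\in G^o),\qquad u^l(x)=\phi^l(x)\quad (x\in\partial G).$$ For a vector $(u^1,\dots,u^m)$ we write $\hat{u}^l(x)=u^l(x)-\sum_{p\neq l}u^p(x)$, and similarly $\hat{v}^l$. *)

From HB Require Import structures.
From mathcomp Require Import all_boot all_order all_algebra.
From mathcomp Require Import all_classical all_reals all_analysis.
Set Implicit Arguments. Unset Strict Implicit. Unset Printing Implicit Defensive.
Import Order.TTheory GRing.Theory Num.Theory.
Local Open Scope ring_scope.

Definition simple_graph (V : finType) (e : rel V) : Prop :=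
  symmetric e /\ irreflexive e.

Definition nbhd (V : finType) (e : rel V) (x : V) : {set V} := [set y | e x y].
Definition deg (V : finType) (e : rel V) (x : V) : nat := #|nbhd e x|.

Fixpoint ball (V : finType) (e : rel V) (n : nat) (x : V) : {set V} :=
  match n with
  | 0 => [set x]
  | k.+1 => ball e k x :|: [set y | [exists z in ball e k x, e z y]]
  end.

Definition connected_graph (V : finType) (e : rel V) : Prop :=
  forall x y : V, exists n, y \in ball e n x.

(* Shortest path distance: least n with y in ball n x (searched among n < #|V|,
   which suffices for a connected graph). *)
Definition gdist (V : finType) (e : rel V) (x y : V) : nat :=
  find (fun n => y \in ball e n x) (iota 0 #|V|).

Definition meanv (R : realType) (V : finType) (e : rel V) (r : V -> R) (x : V) : R :=
  (\sum_(y in nbhd e x) r y) / (deg e x)%:R.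

Definition boundary (R : realType) (V : finType) (e : rel V) : {set V} :=
  [set x | [exists y, @meanv R V e (fun z => ((gdist e z y)%:R : R)) x < (gdist e x y)%:R]].

Definition solves_S (R : realType) (V : finType) (e : rel V) (m : nat)
  (H : V -> R -> R) (f : 'I_m -> V -> R -> R) (phi : 'I_m -> V -> R)
  (u : 'I_m -> V -> R) : Prop :=
  forall l : 'I_m, forall x : V,
    (x \notin boundary R e ->
       u l x = Num.max (H x (meanv e (u l) x - \sum_(p < m | p != l) meanv e (u p) x)
                        - f l x (u l x)) 0)
    /\ (x \in boundary R e -> u l x = phi l x).

Definition uhat (R : realType) (V : finType) (m : nat) (u : 'I_m -> V -> R)
  (l : 'I_m) (x : V) : R := u l x - \sum_(p < m | p != l) u p x.

From HB Require Import structures.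
From mathcomp Require Import all_boot all_order all_algebra.
From mathcomp Require Import all_classical all_reals all_analysis.
Import Order.TTheory GRing.Theory Num.Theory.
Import numFieldNormedType.Exports.

Set Implicit Arguments.
Unset Strict Implicit.
Unset Printing Implicit Defensive.
Local Open Scope classical_set_scope.
Local Open Scope ring_scope.

(* Solutions are nonnegative and segregated: if u^l(x) > 0 at an interior
   point, the argument of H in the l-th equation is positive, which forces the
   argument of every other equation to be nonpositive, hence u^p(x) = 0; on the
   boundary this is the hypothesis phi^i phi^j = 0.  Consequently
   hat u^l <= u^l everywhere, with equality where u^l > 0, and both inclusions
   follow by comparing the two solutions at a point where one of them is
   positive. *)

Section Excess.
Variables (R : numDomainType) (m : nat).

Definition excess (a : 'I_m -> R) (l : 'I_m) : R :=
  a l - \sum_(q < m | q != l) a q.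

Variable a : 'I_m -> R.
Hypothesis a_ge0 : forall q, 0 <= a q.

Lemma excess_le l : excess a l <= a l.
Proof. by rewrite /excess gerBl; apply: sumr_ge0. Qed.

Lemma excess_id l : (forall p, p != l -> a p = 0) -> excess a l = a l.
Proof. by move=> a0; rewrite /excess big1 ?subr0. Qed.

Lemma excess_gt0_others_le0 l p : p != l -> 0 < excess a l -> excess a p <= 0.
Proof.
move=> pl; rewrite !subr_gt0 subr_le0 => al_gt.
have sum_ge (i j : 'I_m) : i != j -> a i <= \sum_(q < m | q != j) a q.
  by move=> ij; rewrite (bigD1 i) //= lerDl; apply: sumr_ge0.
rewrite (le_trans (sum_ge _ _ pl)) // (le_trans (ltW al_gt)) //.
by apply: sum_ge; rewrite eq_sym.
Qed.

End Excess.

Lemma meanv_ge0 (R : realType) (V : finType) (e : rel V) (r : V -> R) x :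
  (forall y, 0 <= r y) -> 0 <= meanv e r x.
Proof. by move=> r_ge0; apply: divr_ge0 => //; apply: sumr_ge0. Qed.

Lemma odd_nondecr_le0 (R : realDomainType) (g : R -> R) :
  g 0 = 0 -> (forall s, s < 0 -> g s = - g (- s)) ->
  (forall s t, 0 <= s -> s <= t -> g s <= g t) ->
  forall s, s <= 0 -> g s <= 0.
Proof.
move=> g0 g_odd g_mono s; rewrite le_eqVlt => /predU1P [-> | s_lt0].
  by rewrite g0.
by rewrite g_odd // oppr_le0 -g0 g_mono // oppr_ge0 ltW.
Qed.

Section Solutions.
Variables (R : realType) (V : finType) (e : rel V) (m : nat).
Variables (H : V -> R -> R) (f : 'I_m -> V -> R -> R) (phi : 'I_m -> V -> R).
Hypothesis H0 : forall x, H x 0 = 0.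
Hypothesis f0 : forall l x, f l x 0 = 0.
Hypothesis H_odd : forall x s, s < 0 -> H x s = - H x (- s).
Hypothesis phi_ge0 : forall l x, x \in boundary R e -> 0 <= phi l x.
Hypothesis phi_disj :
  forall i j x, i != j -> x \in boundary R e -> phi i x * phi j x = 0.
Hypothesis H_mono : forall x s t, 0 <= s -> s <= t -> H x s <= H x t.
Hypothesis f_mono : forall l x s t, 0 <= s -> s <= t -> f l x s <= f l x t.

Variable u : 'I_m -> V -> R.
Hypothesis u_sol : solves_S e H f phi u.

Let means x : 'I_m -> R := fun q => meanv e (u q) x.

Lemma solves_S_ge0 l x : 0 <= u l x.
Proof.
have [u_int u_bd] := u_sol l x.
case: (boolP (x \in boundary R e)) => [x_bd | /u_int ->].
  by rewrite u_bd // phi_ge0.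
by rewrite le_max lexx orbT.
Qed.

Let means_ge0 x q : 0 <= means x q.
Proof. by apply: meanv_ge0 => y; apply: solves_S_ge0. Qed.

Let f_ge0 l x : 0 <= f l x (u l x).
Proof. by rewrite -(f0 l x) f_mono ?solves_S_ge0. Qed.

Lemma solves_S_interior_pos l x : x \notin boundary R e ->
  0 < u l x -> 0 < excess (means x) l.
Proof.
move=> /(proj1 (u_sol l x)) -> ; rewrite lt_max ltxx orbF subr_gt0 => f_lt.
rewrite ltNge; apply/negP => /(odd_nondecr_le0 (H0 x) (H_odd x) (H_mono x)).
by move=> H_le0; have := lt_le_trans (le_lt_trans (f_ge0 l x) f_lt) H_le0; rewrite ltxx.
Qed.

Lemma solves_S_interior_zero p x : x \notin boundary R e ->
  excess (means x) p <= 0 -> u p x = 0.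
Proof.
move=> /(proj1 (u_sol p x)) -> /(odd_nondecr_le0 (H0 x) (H_odd x) (H_mono x)).
by move=> H_le0; rewrite max_r // subr_le0 (le_trans H_le0).
Qed.

Lemma solves_S_segregated l p x : p != l -> 0 < u l x -> u p x = 0.
Proof.
move=> pl ul_gt0; have [ul_bd up_bd] := (proj2 (u_sol l x), proj2 (u_sol p x)).
case: (boolP (x \in boundary R e)) => [x_bd | x_int].
  have /eqP := phi_disj pl x_bd; rewrite -ul_bd // -up_bd // mulf_eq0.
  by case/orP => /eqP // ul0; rewrite ul0 ltxx in ul_gt0.
apply: solves_S_interior_zero => //.
apply: (excess_gt0_others_le0 (means_ge0 x) pl).
exact: solves_S_interior_pos.
Qed.

Lemma uhat_le l x : uhat u l x <= u l x.
Proof. exact: (excess_le (fun q => solves_S_ge0 q x)). Qed.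

Lemma uhat_id l x : 0 < u l x -> uhat u l x = u l x.
Proof.
by move=> ul_gt0; apply: (excess_id (a := u^~ x)) => p /solves_S_segregated; apply.
Qed.

End Solutions.

Arguments solves_S_ge0 {R V e m H f phi} phi_ge0 {u}.
Arguments uhat_le {R V e m H f phi} phi_ge0 {u}.
Arguments uhat_id {R V e m H f phi} H0 f0 H_odd phi_ge0 phi_disj H_mono f_mono {u}.

Theorem mainTheorem4 (R : realType) (V : finType) (e : rel V) (m : nat)
  (H : V -> R -> R) (f : 'I_m -> V -> R -> R) (phi : 'I_m -> V -> R)
  (u v : 'I_m -> V -> R) :
  simple_graph e -> connected_graph e -> (1 < #|V|)%N ->
  (0 < m)%N ->
  (* continuity in the second variable on [0, oo) *)
  (forall x, {within [set s : R | 0 <= s]%classic, continuous (H x)}) ->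
  (forall l x, {within [set s : R | 0 <= s]%classic, continuous (f l x)}) ->
  (forall x, H x 0 = 0) -> (forall l x, f l x 0 = 0) ->
  (* odd extension to negative arguments *)
  (forall x s, s < 0 -> H x s = - H x (- s)) ->
  (forall l x s, s < 0 -> f l x s = - f l x (- s)) ->
  (* boundary data *)
  (forall l x, x \in boundary R e -> 0 <= phi l x) ->
  (forall i j x, i != j -> x \in boundary R e -> phi i x * phi j x = 0) ->
  (* monotonicity on [0, oo) (equivalently on R, by oddness) *)
  (forall x s t, 0 <= s -> s <= t -> H x s <= H x t) ->
  (forall l x s t, 0 <= s -> s <= t -> f l x s <= f l x t) ->
  solves_S e H f phi u -> solves_S e H f phi v ->
  forall l : 'I_m,
    ([set x | v l x < u l x] \subset [set x | uhat v l x < uhat u l x])%SET /\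
    ([set x | uhat v l x < uhat u l x] \subset [set x | v l x <= u l x])%SET.
Proof.
move=> _ _ _ _ _ _ H0 f0 H_odd _ phi_ge0 phi_disj H_mono f_mono u_sol v_sol l.
have uhat_pos w (w_sol : solves_S e H f phi w) :=
  uhat_id H0 f0 H_odd phi_ge0 phi_disj H_mono f_mono w_sol.
split; apply/fintype.subsetP => x; rewrite !inE => lt_x.
  have ul_gt0 : 0 < u l x := le_lt_trans (solves_S_ge0 phi_ge0 v_sol l x) lt_x.
  by rewrite (uhat_pos _ u_sol) // (le_lt_trans (uhat_le phi_ge0 v_sol l x)).
rewrite leNgt; apply/negP => vl_gt_ul.
have vl_gt0 : 0 < v l x := le_lt_trans (solves_S_ge0 phi_ge0 u_sol l x) vl_gt_ul.
have := lt_le_trans lt_x (uhat_le phi_ge0 u_sol l x).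
by rewrite (uhat_pos _ v_sol) // ltNge (ltW vl_gt_ul).
Qed.
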